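(* Every invertible element of $\mathcal{A}(\bm{p})$ is an exponential: $e^{\mathcal{A}(\bm{p})}=\mathcal{A}(\bm{p})^{-1}$, where $e^{\mathcal{A}(\bm{p})}=\{e^f:f\in\mathcal{A}(\bm{p})\}$ and $\mathcal{A}(\bm{p})^{-1}$ is the group of invertible elements. Consequently the first Čech cohomology group with integer coefficients of the maximal ideal space is trivial: $H^1(M(\mathcal{A}(\bm{p})),\mathbb{Z})=\{0\}$.
   Context: Fix $\bm{p}:\mathbb{N}_0\to(0,\infty)$ with $\lim_{n\to\infty}\bm{p}(n)^{1/n}=\infty$. For an entire function $f$ write $f(z)=\sum_{n\ge0}\widehat f(n)z^n$. $\mathcal{A}(\bm{p})$ is the set of entire functions $f$ with $\sup_{n\ge 0}\bm{p}(n)|\widehat f(n)|<\infty$, with pointwise addition and scalar multiplication, the weighted Hadamard product $(f\ast g)(z)=\sum_{n\ge0}\bm{p}(n)\widehat f(n)\widehat g(n)z^n$, and norm $\|f\|=\sup_{n\ge0}\bm{p}(n)|\widehat f(n)|$; it is a commutative unital complex semisimple Banach algebra with unit $\varepsilon(z)=\sum_{n\ge0}\frac{z^n}{\bm{p}(n)}$. Exponentials are $e^f=\sum_{m\ge0}f^m/m!$ with $\ast$-powers. $M(\mathcal{A}(\bm{p}))$ is the maximal ideal space (nonzero multiplicative linear functionals with the Gelfand topology). *)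

From HB Require Import structures.
From mathcomp Require Import all_boot all_order all_algebra.
From mathcomp Require Import all_classical all_reals all_analysis.
From mathcomp Require Import complex.
Set Implicit Arguments. Unset Strict Implicit. Unset Printing Implicit Defensive.
Import Order.TTheory GRing.Theory Num.Theory.
Local Open Scope ring_scope.
Local Open Scope classical_set_scope.
Local Open Scope complex_scope.

Section Defs.
Variable R : realType.
Local Notation C := R[i].
Local Notation normc := (@Normc.normc R).

(* An entire function is identified with its Taylor coefficient sequence
   (fhat n)_n; the weighted bound forces the series to be entire. *)
Definition coeffs := nat -> C.

Definition inA (p : nat -> R) (a : coeffs) : Prop :=
  exists K : R, forall n, p n * normc (a n) <= K.

Definition hprod (p : nat -> R) (a b : coeffs) : coeffs :=
  fun n => ((p n)%:C)%C * a n * b n.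

Definition unitA (p : nat -> R) : coeffs := fun n => (((p n)^-1)%:C)%C.

Definition hpow (p : nat -> R) (a : coeffs) (m : nat) : coeffs :=
  iter m (hprod p a) (unitA p).

Definition expPartial (p : nat -> R) (a : coeffs) (N : nat) : coeffs :=
  fun n => \sum_(m < N) ((m`!)%:R)^-1 * hpow p a m n.

Definition is_expA (p : nat -> R) (a g : coeffs) : Prop :=
  inA p g /\
  forall eps : R, 0 < eps -> exists N0 : nat, forall N : nat, (N0 <= N)%N ->
    forall n, p n * normc (expPartial p a N n - g n) <= eps.

Definition invertibleA (p : nat -> R) (g : coeffs) : Prop :=
  inA p g /\ exists h : coeffs, inA p h /\ hprod p g h = unitA p.

(* A functional is
   represented by a function on all coefficient sequences, normalised to be
   0 outside A(p), so that characters of A(p) correspond bijectively to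
   the functions satisfying isChar. *)
Definition isChar (p : nat -> R) (phi : coeffs -> C) : Prop :=
  [/\ (forall a, ~ inA p a -> phi a = 0),
      (forall a b, inA p a -> inA p b -> phi (fun n => a n + b n) = phi a + phi b),
      (forall (c : C) a, inA p a -> phi (fun n => c * a n) = c * phi a),
      (forall a b, inA p a -> inA p b -> phi (hprod p a b) = phi a * phi b)
    & exists a, inA p a /\ phi a != 0].

Definition maxIdealSpace (p : nat -> R) : set (coeffs -> C) := [set phi | isChar p phi].

(* Open sets of the Gelfand topology (relative weak-* topology) on M(A(p)):
   U is open iff each of its points has a basic weak-* neighbourhood in U. *)
Definition gelfand_open (p : nat -> R) (U : set (coeffs -> C)) : Prop :=
  U `<=` maxIdealSpace p /\
  forall phi, U phi -> exists (k : nat) (fs : nat -> coeffs) (eps : R),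
    (forall i, (i < k)%N -> inA p (fs i)) /\ 0 < eps /\
    forall psi, maxIdealSpace p psi ->
      (forall i, (i < k)%N -> normc (psi (fs i) - phi (fs i)) < eps) -> U psi.

End Defs.

(* Vanishing of the first Cech cohomology group with integer coefficients
   of the space X (open sets given by [op]):  every Cech 1-cocycle on an
   open cover becomes a coboundary after passing to some refinement, i.e.
   the direct limit over open covers of H^1(nerve, Z) is zero. *)
Definition cech_H1_Z_trivial (T : Type) (X : set T) (op : set T -> Prop) : Prop :=
  forall (I : Type) (U : I -> set T),
    (forall i, op (U i)) -> X `<=` \bigcup_i U i ->
    forall g : I -> I -> int,
      (forall i j k, (X `&` U i `&` U j `&` U k) !=set0 -> g i j + g j k = g i k) ->
      exists (J : Type) (V : J -> set T) (tau : J -> I),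
        [/\ (forall j, op (V j)), X `<=` \bigcup_j V j,
            (forall j, V j `<=` U (tau j)) &
            exists h : J -> int, forall j k, (X `&` V j `&` V k) !=set0 ->
              g (tau j) (tau k) = h k - h j].

(* Multiplying the n-th Taylor coefficient by p(n) identifies
   A(p) with the algebra of bounded complex sequences under pointwise
   operations.
   1. If g is invertible, its weighted coefficients w_n are bounded and
      bounded away from 0, so they have logarithms z_n with
      |z_n| <= |ln |w_n|| + pi uniformly bounded.  Since the exponential
      series converges uniformly on discs, the exponential series of
      f = (z_n / p(n))_n converges to g in A(p).  Conversely the limit of
      the exponential series of f is coefficientwise exp, whose inverse is
      exp of the opposite.
   2. For S a set of indices, the indicator 1_S is an idempotent, so each
      character takes the value 0 or 1 on it, and the characters living on
      S form an open set charSet S.  Each ultrafilter on the indices yields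
      a character (limits along the ultrafilter); hence, given an open
      cover, the index set is covered by finitely many sets S whose
      charSet lies in one member of the cover.  Making these sets pairwise
      disjoint gives a finite refinement by pairwise disjoint open sets,
      on which every Cech 1-cocycle is a coboundary. *)

From HB Require Import structures.
From mathcomp Require Import all_boot all_order all_algebra.
From mathcomp Require Import all_classical all_reals all_analysis.
From mathcomp Require Import complex.
From mathcomp Require Import ring lra zify.
Import Order.TTheory GRing.Theory Num.Theory.
Import numFieldNormedType.Exports.
Local Open Scope ring_scope.
Local Open Scope classical_set_scope.
Set Implicit Arguments. Unset Strict Implicit. Unset Printing Implicit Defensive.

Section ComplexModulus.
Variable R : rcfType.
Local Notation normc := (@Normc.normc R).

Lemma normc_real (x : R) : normc (x%:C)%C = `|x|.
Proof. by rewrite /Normc.normc /= expr0n /= addr0 sqrtr_sqr. Qed.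

Lemma normc_ge0 (z : R[i]) : 0 <= normc z.
Proof. by case: z => a b; rewrite /Normc.normc sqrtr_ge0. Qed.

Lemma normc_Re (z : R[i]) : `|complex.Re z| <= normc z.
Proof.
case: z => a b /=; rewrite /Normc.normc -sqrtr_sqr; apply: ler_wsqrtr.
by rewrite lerDl sqr_ge0.
Qed.

Lemma normc_Im (z : R[i]) : `|complex.Im z| <= normc z.
Proof.
case: z => a b /=; rewrite /Normc.normc -sqrtr_sqr; apply: ler_wsqrtr.
by rewrite lerDr sqr_ge0.
Qed.

Lemma normc_le_ReIm (z : R[i]) : normc z <= `|complex.Re z| + `|complex.Im z|.
Proof.
case: z => a b /=; rewrite /Normc.normc.
have h0 : 0 <= `|a| + `|b| by rewrite addr_ge0.
rewrite -(ger0_norm h0) -(sqrtr_sqr (`|a| + `|b|)); apply: ler_wsqrtr.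
rewrite sqrrD (real_normK (num_real a)) (real_normK (num_real b)) addrAC lerDl.
by apply: mulrn_wge0; apply: mulr_ge0.
Qed.

Lemma normcX (z : R[i]) n : normc (z ^+ n) = normc z ^+ n.
Proof.
elim: n => [|n IH]; first by rewrite !expr0 Normc.normc1.
by rewrite !exprS Normc.normcM IH.
Qed.

Lemma normc_sum (I : Type) (r : seq I) (P : pred I) (F : I -> R[i]) :
  normc (\sum_(i <- r | P i) F i) <= \sum_(i <- r | P i) normc (F i).
Proof.
apply: (big_ind2 (fun z x => normc z <= x)) => //; first by rewrite Normc.normc0.
by move=> z1 x1 z2 x2 h1 h2; apply: le_trans (le_normcD _ _) (lerD h1 h2).
Qed.

Lemma normc_distC (a b : R[i]) : normc (a - b) = normc (b - a).
Proof. by rewrite -normcN opprB. Qed.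

Lemma normc_dist_tri (a b c : R[i]) : normc (a - c) <= normc (a - b) + normc (b - c).
Proof. by apply: le_trans (le_normcD _ _); rewrite addrA subrK. Qed.

End ComplexModulus.

Section ExpSeries.
Variable F : numFieldType.

Definition expTerm (z : F) (m : nat) : F := (m`!%:R)^-1 * z ^+ m.
Definition expSum (N : nat) (z : F) : F := \sum_(m < N) expTerm z m.

(* [expSum N a * expSum N b - expSum N (a + b)]: the terms of the product
   a^j b^k / (j! k!) with j < N, k < N and j + k >= N. *)
Definition expDefect (N : nat) (a b : F) : F :=
  \sum_(j < N) expTerm a j * \sum_(N - j <= k < N) expTerm b k.

Lemma expSum_nat N z : expSum N z = \sum_(0 <= k < N) expTerm z k.
Proof. by rewrite /expSum big_mkord. Qed.

Lemma expSum_sub N M z : (N <= M)%N ->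
  expSum M z - expSum N z = \sum_(N <= k < M) expTerm z k.
Proof.
by move=> NM; rewrite !expSum_nat (@big_cat_nat _ _ _ N 0 M) //= addrC addrK.
Qed.

Lemma binomial_expTerm (a b : F) m j : (j <= m)%N ->
  (m`!%:R)^-1 * (b ^+ (m - j) * a ^+ j *+ 'C(m, j)) = expTerm a j * expTerm b (m - j).
Proof.
move=> jm; rewrite /expTerm -mulrnAr -mulr_natl.
have -> : (m`!%:R : F) = 'C(m, j)%:R * (j`!%:R * (m - j)`!%:R).
  by rewrite -!natrM bin_fact.
have fact_neq0 k : (k`!%:R : F) != 0 by rewrite pnatr_eq0 -lt0n fact_gt0.
have bin_neq0 : ('C(m, j)%:R : F) != 0 by rewrite pnatr_eq0 -lt0n bin_gt0.
by field; rewrite bin_neq0 !fact_neq0.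
Qed.

Lemma expSum_add N a b :
  expSum N (a + b) = \sum_(j < N) \sum_(0 <= k < N - j) expTerm a j * expTerm b k.
Proof.
elim: N => [|N IH]; first by rewrite /expSum !big_ord0.
rewrite /expSum big_ord_recr /= -/(expSum N (a + b)) IH.
rewrite big_ord_recr /= subSnn big_nat1.
have -> : \sum_(j < N) \sum_(0 <= k < N.+1 - j) expTerm a j * expTerm b k =
          \sum_(j < N) (\sum_(0 <= k < N - j) expTerm a j * expTerm b k
                        + expTerm a j * expTerm b (N - j)).
  apply: eq_bigr => j _; rewrite subSn; last exact: ltnW (ltn_ord j).
  by rewrite big_nat_recr.
rewrite big_split /= -!addrA; congr (_ + _).
rewrite /expTerm [a + b]addrC exprDn mulr_sumr big_ord_recr /= subnn.
congr (_ + _).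
  by apply: eq_bigr => j _; rewrite binomial_expTerm ?(ltnW (ltn_ord j)).
by rewrite binn !expr0 mul1r mulr1n fact0 invr1 !mul1r mulr1.
Qed.

Lemma expSum_mul_sub N a b :
  expSum N a * expSum N b - expSum N (a + b) = expDefect N a b.
Proof.
rewrite expSum_add /expDefect {1}/expSum mulr_suml -sumrB.
apply: eq_bigr => j _.
rewrite expSum_nat (@big_cat_nat _ _ _ (N - j)) //= ?leq_subr // mulrDr mulr_sumr.
by rewrite addrC addKr.
Qed.

End ExpSeries.

Section RealExpSeries.
Variable R : realType.
Local Notation normc := (@Normc.normc R).

Lemma expSum_cvg (x : R) : expSum n x @[n --> \oo] --> expR x.
Proof.
have -> : (fun n => expSum n x) = series (exp_coeff x).
  apply: funext => n; rewrite expSum_nat /series /=.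
  by apply: eq_bigr => k _; rewrite /expTerm /exp_coeff /= mulrC.
exact: is_cvg_series_exp_coeff.
Qed.

Lemma expTerm_ge0 (x : R) k : 0 <= x -> 0 <= expTerm x k.
Proof. by move=> x0; rewrite /expTerm mulr_ge0 // ?invr_ge0 ?ler0n // exprn_ge0. Qed.

Lemma expTerm_le (s t : R) k : 0 <= s -> s <= t -> expTerm s k <= expTerm t k.
Proof.
move=> s0 st; rewrite /expTerm ler_wpM2l ?invr_ge0 ?ler0n //.
by rewrite lerXn2r // ?nnegrE // (le_trans s0 st).
Qed.

Lemma normc_expTerm (z : R[i]) k : normc (expTerm z k) = expTerm (normc z) k.
Proof.
rewrite /expTerm Normc.normcM normcX; congr (_ * _).
have -> : (k`!%:R : R[i]) = ((k`!%:R : R)%:C)%C by rewrite rmorph_nat.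
by rewrite Normc.normcV normc_real ger0_norm.
Qed.

Lemma normc_expSum (z : R[i]) N : normc (expSum N z) <= expSum N (normc z).
Proof.
by apply: le_trans (normc_sum _ _ _) _; apply: ler_sum => k _; rewrite normc_expTerm.
Qed.

Lemma normc_expSum_sub (z : R[i]) (K : R) N M : normc z <= K -> (N <= M)%N ->
  normc (expSum M z - expSum N z) <= expSum M K - expSum N K.
Proof.
move=> zK NM; rewrite !expSum_sub //; apply: le_trans (normc_sum _ _ _) _.
by apply: ler_sum => k _; rewrite normc_expTerm; apply/expTerm_le/zK/normc_ge0.
Qed.

Lemma normc_expDefect (a b : R[i]) N :
  normc (expDefect N a b) <= expDefect N (normc a) (normc b).
Proof.
apply: le_trans (normc_sum _ _ _) _; apply: ler_sum => j _.
rewrite Normc.normcM normc_expTerm; apply: ler_wpM2l; first exact/expTerm_ge0/normc_ge0.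
by apply: le_trans (normc_sum _ _ _) _; apply: ler_sum => k _; rewrite normc_expTerm.
Qed.

(* The real defect tends to 0, because expR (s + t) = expR s * expR t. *)
Lemma expDefect_cvg0 (s t : R) : expDefect n s t @[n --> \oo] --> 0.
Proof.
have -> : (fun n => expDefect n s t) =
          (fun n => expSum n s * expSum n t - expSum n (s + t)).
  by apply: funext => n; rewrite expSum_mul_sub.
rewrite -(subrr (expR (s + t))) [X in X - _]expRD.
by apply: cvgB; [apply: cvgM|]; apply: expSum_cvg.
Qed.

(* The real tails expR K - expSum N K become small; combined with
   [normc_expSum_sub] this is uniform convergence on the disc |z| <= K. *)
Lemma expSum_tail_small (K eps : R) : 0 < eps ->
  exists N0, forall N, (N0 <= N)%N -> expR K - expSum N K <= eps.
Proof.
move=> e0; have [N0 _ HN] := cvgr_dist_le _ _ (expSum_cvg (x:=K)) _ e0.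
by exists N0 => N /HN /= /(le_trans (ler_norm _)).
Qed.

End RealExpSeries.

Section ComplexExp.
Variable R : realType.
Local Notation C := R[i].
Local Notation normc := (@Normc.normc R).
Local Notation Re := (@complex.Re R).
Local Notation Im := (@complex.Im R).

Definition cis (y : R) : C := (cos y +i* sin y)%C.
Definition cexp (z : C) : C := ((expR (Re z))%:C)%C * cis (Im z).

Lemma expr_i k : ('i%C : C) ^+ k =
  (((~~ odd k)%:R * (-1) ^+ k./2) +i* ((odd k)%:R * (-1) ^+ k.-1./2))%C.
Proof.
elim: k => [|k IH]; first by rewrite expr0 /= mul1r mul0r.
rewrite exprS IH /= negbK; simpc; congr (_ +i* _)%C.
case/boolP: (odd k) => ok /=; last by rewrite !mul0r oppr0.
have -> : k = (k./2).*2.+1 by rewrite -{1}(odd_double_half k) ok.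
by rewrite /= !doubleK !mul1r exprS mulN1r.
Qed.

Lemma real_expTerm (y : R) k : ((expTerm y k)%:C)%C = expTerm (y%:C)%C k.
Proof. by rewrite /expTerm rmorphM rmorphXn fmorphV rmorph_nat. Qed.

Lemma real_expSum (x : R) N : ((expSum N x)%:C)%C = expSum N (x%:C)%C.
Proof. by rewrite /expSum rmorph_sum; apply: eq_bigr => k _; exact: real_expTerm. Qed.

Lemma expTerm_iy (y : R) k :
  expTerm ('i%C * (y%:C)%C) k = ((expTerm y k)%:C)%C * 'i%C ^+ k.
Proof. by rewrite real_expTerm /expTerm exprMn; ring. Qed.

Lemma Re_real_mul (c : R) (w : C) : Re ((c%:C)%C * w) = c * Re w.
Proof. by case: w => a b /=; rewrite mul0r subr0. Qed.

Lemma Im_real_mul (c : R) (w : C) : Im ((c%:C)%C * w) = c * Im w.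
Proof. by case: w => a b /=; rewrite mul0r addr0. Qed.

Lemma Re_expSum_iy (y : R) N :
  Re (expSum N ('i%C * (y%:C)%C)) = series (cos_coeff y) N.
Proof.
rewrite raddf_sum /series /= big_mkord; apply: eq_bigr => k _.
by rewrite expTerm_iy Re_real_mul expr_i /= /expTerm /cos_coeff /= -exprnP; ring.
Qed.

Lemma Im_expSum_iy (y : R) N :
  Im (expSum N ('i%C * (y%:C)%C)) = series (sin_coeff y) N.
Proof.
rewrite raddf_sum /series /= big_mkord; apply: eq_bigr => k _.
by rewrite expTerm_iy Im_real_mul expr_i /= /expTerm /sin_coeff /= ?exprnP; ring.
Qed.

Lemma cvg_dist0 (u : nat -> R) (L : R) :
  u n @[n --> \oo] --> L -> `|u n - L| @[n --> \oo] --> 0.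
Proof.
move=> uL; have := cvg_norm (cvgB uL (cvg_cst L)).
by rewrite subrr normr0; apply.
Qed.

Lemma expSum_cis_cvg (y : R) :
  normc (expSum n ('i%C * (y%:C)%C) - cis y) @[n --> \oo] --> 0.
Proof.
apply: (@squeeze_cvgr _ _ _ _ (fun=> 0)
  (fun n => `|series (cos_coeff y) n - cos y| + `|series (sin_coeff y) n - sin y|)).
- near=> n; rewrite normc_ge0 /=; apply: le_trans (normc_le_ReIm _) _.
  by rewrite !raddfB /= Re_expSum_iy Im_expSum_iy.
- exact: cvg_cst.
rewrite -[0 : R]addr0; apply: cvgD; apply: cvg_dist0.
  by rewrite unlock; exact: is_cvg_series_cos_coeff.
by rewrite unlock; exact: is_cvg_series_sin_coeff.
Unshelve. all: by end_near.
Qed.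

(* The exponential series converges to [cexp]: write z = x + iy and compare
   expSum n z with expSum n x * expSum n (iy) through [expDefect]. *)
Lemma expSum_cexp_cvg (z : C) : normc (expSum n z - cexp z) @[n --> \oo] --> 0.
Proof.
set x := Re z; set y := Im z.
set X : C := (x%:C)%C; set Y : C := 'i%C * (y%:C)%C.
have zXY : z = X + Y by rewrite /X /Y /x /y -complexE.
have normcY : normc Y = `|y| by rewrite Normc.normcM normc_real /Normc.normc /=
  expr0n expr1n add0r sqrtr1 mul1r.
pose bound n := `|expSum n x - expR x| * expSum n `|y|
  + expR x * normc (expSum n Y - cis y) + expDefect n `|x| `|y|.
apply: (@squeeze_cvgr _ _ _ _ (fun=> 0) bound).
- near=> n; rewrite normc_ge0 /=.
  have -> : expSum n z - cexp z = (expSum n X - ((expR x)%:C)%C) * expSum n Y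
     + ((expR x)%:C)%C * (expSum n Y - cis y) - expDefect n X Y.
    by rewrite -expSum_mul_sub -zXY /cexp -/x -/y; ring.
  apply: le_trans (le_normcD _ _) _; rewrite normcN /bound lerD //; last first.
    by rewrite -normcY -(normc_real x); apply: normc_expDefect.
  apply: le_trans (le_normcD _ _) _; rewrite !Normc.normcM lerD //.
    by rewrite /X -real_expSum -rmorphB normc_real ler_wpM2l // -normcY normc_expSum.
  by rewrite normc_real ger0_norm ?expR_ge0.
- exact: cvg_cst.
have -> : (0 : R) = 0 * expR `|y| + expR x * 0 + 0 by rewrite mul0r mulr0 !addr0.
apply: cvgD; last exact: expDefect_cvg0.
apply: cvgD; last by apply: cvgM; [exact: cvg_cst|exact: expSum_cis_cvg].
by apply: cvgM; [apply: cvg_dist0|]; apply: expSum_cvg.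
Unshelve. all: by end_near.
Qed.

Lemma expSum_cexp_bound (z : C) (K : R) N : normc z <= K ->
  normc (expSum N z - cexp z) <= expR K - expSum N K.
Proof.
move=> zK.
have lim_bound : (expSum n K - expSum N K + normc (expSum n z - cexp z))
    @[n --> \oo] --> expR K - expSum N K + 0.
  apply: cvgD; last exact: expSum_cexp_cvg.
  by apply: cvgB; [apply: expSum_cvg|apply: cvg_cst].
rewrite -[X in _ <= X]addr0; apply: (ler_cvg_to (cvg_cst _) lim_bound).
near=> n.
have Nn : (N <= n)%N by near: n; exact: nbhs_infty_ge.
apply: le_trans (normc_dist_tri (expSum N z) (expSum n z) (cexp z)) _.
by rewrite lerD2r normc_distC; apply: normc_expSum_sub.
Unshelve. all: by end_near.
Qed.

Lemma cexpD (a b : C) : cexp (a + b) = cexp a * cexp b.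
Proof.
rewrite /cexp !raddfD /= expRD rmorphM /cis cosD sinD; simpc.
by congr (_ +i* _)%C; ring.
Qed.

Lemma cexpN_mul (z : C) : cexp z * cexp (- z) = 1.
Proof. by rewrite -cexpD subrr /cexp /= expR0 /cis cos0 sin0 mul1r. Qed.

Lemma normc_cexp (z : C) : normc (cexp z) = expR (Re z).
Proof.
rewrite /cexp Normc.normcM normc_real ger0_norm ?expR_ge0 //.
by rewrite /cis /Normc.normc /= cos2Dsin2 sqrtr1 mulr1.
Qed.

Lemma unit_circle_angle (c s : R) : c ^+ 2 + s ^+ 2 = 1 ->
  exists y, [/\ cos y = c, sin y = s & `|y| <= pi].
Proof.
move=> cs1.
have cb : -1 <= c <= 1.
  have : c ^+ 2 <= 1 by rewrite -cs1 lerDl sqr_ge0.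
  by move=> h; apply/andP; split; nra.
have sqs : Num.sqrt (1 - c ^+ 2) = `|s| by rewrite -cs1 addrC addKr sqrtr_sqr.
have [a0 api] := (acos_ge0 cb, acos_lepi cb).
exists (if 0 <= s then acos c else - acos c); split.
- by case: ifP => _; rewrite ?cosN acosK // in_itv.
- case: ifP => s0; rewrite ?sinN sin_acos // sqs; first by rewrite ger0_norm.
  by rewrite ltr0_norm ?opprK // ltNge s0.
- by case: ifP => _; rewrite ?normrN ger0_norm.
Qed.

Lemma cexp_log (w : C) : w != 0 ->
  exists z, cexp z = w /\ normc z <= `|ln (normc w)| + pi.
Proof.
move=> w0; set r := normc w.
have r0 : 0 < r.
  rewrite lt_def normc_ge0 andbT; apply: contra w0 => /eqP.
  by move/Normc.eq0_normc => ->.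
have rr : r ^+ 2 = Re w ^+ 2 + Im w ^+ 2.
  by rewrite /r; case: (w) => a b /=; rewrite sqr_sqrtr // addr_ge0 // sqr_ge0.
have cs1 : (Re w / r) ^+ 2 + (Im w / r) ^+ 2 = 1.
  by rewrite !expr_div_n -mulrDl -rr divff // expf_neq0 // gt_eqF.
have [y [cy sy ypi]] := unit_circle_angle cs1.
exists (@Complex R (ln r) y); split.
  rewrite /cexp /= lnK ?posrE // /cis cy sy (complexE w); simpc.
  by congr (_ +i* _)%C; field; rewrite gt_eqF.
by apply: le_trans (normc_le_ReIm _) _; rewrite lerD2l.
Qed.

End ComplexExp.

(* Multiplying the n-th coefficient by p(n) identifies A(p) with the algebra
   of bounded complex sequences under pointwise operations: [hprod] becomes
   the pointwise product, [unitA] the constant sequence 1 and the norm of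
   A(p) the sup norm. *)
Section WeightedCoefficients.
Variable R : realType.
Local Notation C := R[i].
Local Notation normc := (@Normc.normc R).
Variable p : nat -> R.
Hypothesis p_pos : forall n, 0 < p n.
Local Notation pc n := (((p n)%:C)%C : C).

Lemma pc_neq0 n : pc n != 0.
Proof.
by apply: contraTneq (p_pos n) => /(congr1 (@complex.Re R)) /= ->; rewrite ltxx.
Qed.

Lemma normc_pc n (w : C) : normc (pc n * w) = p n * normc w.
Proof. by rewrite Normc.normcM normc_real gtr0_norm. Qed.

Lemma inA_boundedE (a : coeffs R) :
  inA p a <-> exists K, forall n, normc (pc n * a n) <= K.
Proof. by split=> -[K HK]; exists K => n; have := HK n; rewrite normc_pc. Qed.

Lemma unitA_weighted n : pc n * unitA p n = 1.
Proof. by rewrite /unitA fmorphV divff // pc_neq0. Qed.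

Lemma hprod_weighted (a b : coeffs R) n :
  pc n * hprod p a b n = (pc n * a n) * (pc n * b n).
Proof. by rewrite /hprod; ring. Qed.

Lemma hpow_weighted (a : coeffs R) m n : pc n * hpow p a m n = (pc n * a n) ^+ m.
Proof.
elim: m => [|m IH]; first by rewrite /hpow /= unitA_weighted.
by rewrite exprS -IH /hpow /= -/(hpow p a m) hprod_weighted.
Qed.

Lemma expPartial_weighted (a : coeffs R) N n :
  pc n * expPartial p a N n = expSum N (pc n * a n).
Proof.
rewrite /expPartial /expSum mulr_sumr; apply: eq_bigr => m _.
by rewrite /expTerm -hpow_weighted; ring.
Qed.

Lemma dist_expPartial (a g : coeffs R) N n :
  p n * normc (expPartial p a N n - g n) = normc (expSum N (pc n * a n) - pc n * g n).
Proof. by rewrite -normc_pc mulrBr expPartial_weighted. Qed.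

Lemma is_expA_of_logs (g : coeffs R) (z : nat -> C) (K : R) :
  inA p g -> (forall n, cexp (z n) = pc n * g n) -> (forall n, normc (z n) <= K) ->
  inA p (fun n => z n / pc n) /\ is_expA p (fun n => z n / pc n) g.
Proof.
move=> gA zg zK.
have wz n : pc n * (z n / pc n) = z n by rewrite mulrC divfK // pc_neq0.
split; first by apply/inA_boundedE; exists K => n; rewrite wz.
split=> // eps e0; have [N0 HN0] := expSum_tail_small K e0.
exists N0 => N NN0 n; rewrite dist_expPartial wz -zg.
exact: le_trans (expSum_cexp_bound _ (zK n)) (HN0 _ NN0).
Qed.

Lemma ln_bounded (r K1 K2 : R) : 0 < r -> r <= K1 -> r^-1 <= K2 ->
  `|ln r| <= K1 + K2.
Proof.
move=> r0 rK1 rK2.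
have l1 : ln r < r := ln_sublinear r0.
have l2 : - ln r < r^-1 by rewrite -lnV ?posrE // ln_sublinear // invr_gt0.
have ri0 : 0 < r^-1 by rewrite invr_gt0.
by rewrite ler_norml; apply/andP; split; lra.
Qed.

(* An invertible g has weighted coefficients bounded and bounded away from 0,
   so they admit uniformly bounded logarithms. *)
Lemma invertibleA_logs (g : coeffs R) : invertibleA p g ->
  exists K, forall n, exists z, cexp z = pc n * g n /\ normc z <= K.
Proof.
case=> /inA_boundedE [K1 HK1] [h [/inA_boundedE [K2 HK2] gh]].
have ghn n : (pc n * g n) * (pc n * h n) = 1.
  by rewrite -hprod_weighted gh unitA_weighted.
exists (K1 + K2 + pi) => n.
have gn0 : pc n * g n != 0.
  by apply: contra_eq_neq (ghn n) => ->; rewrite mul0r eq_sym oner_neq0.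
have gpos : 0 < normc (pc n * g n).
  by rewrite lt_def normc_ge0 andbT; apply: contra gn0 => /eqP /Normc.eq0_normc ->.
have [z [zg zb]] := cexp_log gn0; exists z; split => //.
apply: le_trans zb _; rewrite lerD2r ln_bounded //.
have -> : (normc (pc n * g n))^-1 = normc (pc n * h n).
  apply: (mulfI (negbT (gt_eqF gpos))).
  by rewrite -Normc.normcM ghn Normc.normc1 divff ?gt_eqF.
exact: HK2.
Qed.

Lemma invertibleA_expA (g : coeffs R) :
  invertibleA p g -> exists f, inA p f /\ is_expA p f g.
Proof.
move=> gI; have [K Hlog] := invertibleA_logs gI.
have [z Hz] := choice Hlog.
have [fA fg] := is_expA_of_logs gI.1 (fun n => (Hz n).1) (fun n => (Hz n).2).
by exists (fun n => z n / pc n).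
Qed.

Lemma is_expA_weighted (f g : coeffs R) : inA p f -> is_expA p f g ->
  forall n, pc n * g n = cexp (pc n * f n).
Proof.
move=> /inA_boundedE [K HK] [_ fg] n.
apply/eqP; rewrite -subr_eq0; apply/eqP/Normc.eq0_normc/eqP.
rewrite eq_le normc_ge0 andbT; apply/ler_addgt0Pr => eps e0; rewrite add0r.
have e2 : 0 < eps / 2 by rewrite divr_gt0.
have [N1 HN1] := fg _ e2; have [N2 HN2] := expSum_tail_small K e2.
set N := maxn N1 N2.
have b1 := HN1 N (leq_maxl _ _) n; rewrite dist_expPartial in b1.
have b2 := le_trans (expSum_cexp_bound N (HK n)) (HN2 N (leq_maxr _ _)).
apply: le_trans (normc_dist_tri _ (expSum N (pc n * f n)) _) _.
by rewrite [eps]splitr normc_distC lerD.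
Qed.

Lemma expA_invertibleA (g : coeffs R) :
  (exists f, inA p f /\ is_expA p f g) -> invertibleA p g.
Proof.
case=> f [fA fg]; have gf := is_expA_weighted fA fg.
split; first exact: fg.1.
have [K HK] := (inA_boundedE f).1 fA.
have hw n : pc n * (cexp (- (pc n * f n)) / pc n) = cexp (- (pc n * f n)).
  by rewrite mulrC divfK ?pc_neq0.
exists (fun n => cexp (- (pc n * f n)) / pc n); split.
  apply/inA_boundedE; exists (expR K) => n.
  rewrite hw normc_cexp ler_expR raddfN /=.
  by apply: le_trans (HK n); apply: le_trans (normc_Re _); rewrite -normrN ler_norm.
apply: funext => n; apply: (mulfI (pc_neq0 n)).
by rewrite hprod_weighted unitA_weighted gf hw cexpN_mul.
Qed.

End WeightedCoefficients.

(* Indicators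
   are idempotents of A(p), hence detect the clopen subsets of M(A(p)). *)
Section Indicators.
Variable R : realType.
Local Notation C := R[i].
Local Notation normc := (@Normc.normc R).
Variable p : nat -> R.
Hypothesis p_pos : forall n, 0 < p n.
Local Notation pc n := (((p n)%:C)%C : C).

Lemma inA_add (a b : coeffs R) : inA p a -> inA p b -> inA p (fun n => a n + b n).
Proof.
move=> /(inA_boundedE p_pos) [K1 H1] /(inA_boundedE p_pos) [K2 H2].
apply/(inA_boundedE p_pos); exists (K1 + K2) => n.
by rewrite mulrDr; apply: le_trans (le_normcD _ _) (lerD (H1 n) (H2 n)).
Qed.

Lemma inA_scale (c : C) (a : coeffs R) : inA p a -> inA p (fun n => c * a n).
Proof.
move=> /(inA_boundedE p_pos) [K H]; apply/(inA_boundedE p_pos).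
by exists (normc c * K) => n; rewrite mulrCA Normc.normcM ler_wpM2l ?normc_ge0.
Qed.

Lemma inA_hprod (a b : coeffs R) : inA p a -> inA p b -> inA p (hprod p a b).
Proof.
move=> /(inA_boundedE p_pos) [K1 H1] /(inA_boundedE p_pos) [K2 H2].
apply/(inA_boundedE p_pos); exists (K1 * K2) => n.
by rewrite hprod_weighted Normc.normcM ler_pM ?normc_ge0.
Qed.

Lemma inA_unitA : inA p (unitA p).
Proof.
by apply/(inA_boundedE p_pos); exists 1 => n; rewrite (unitA_weighted p_pos) Normc.normc1.
Qed.

Lemma hprod_unitA (a : coeffs R) : hprod p a (unitA p) = a.
Proof.
apply: funext => n; apply: (mulfI (pc_neq0 p_pos n)).
by rewrite hprod_weighted (unitA_weighted p_pos) mulr1.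
Qed.

Definition indic (S : set nat) : coeffs R :=
  fun n => if `[< S n >] then unitA p n else 0.

Lemma indic_weighted S n : pc n * indic S n = if `[< S n >] then 1 else 0.
Proof. by rewrite /indic; case: ifP => _; rewrite ?(unitA_weighted p_pos) ?mulr0. Qed.

Lemma inA_indic S : inA p (indic S).
Proof.
apply/(inA_boundedE p_pos); exists 1 => n; rewrite indic_weighted.
by case: ifP => _; rewrite ?Normc.normc1 ?Normc.normc0.
Qed.

Lemma hprod_indic A B : hprod p (indic A) (indic B) = indic (A `&` B).
Proof.
apply: funext => n; apply: (mulfI (pc_neq0 p_pos n)).
rewrite hprod_weighted !indic_weighted.
case: asboolP => hA; case: asboolP => hB; case: asboolP => hAB;
  rewrite ?mulr1 ?mulr0 //; exfalso; by [apply: hAB | apply: hB; case: hAB |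
  apply: hA; case: hAB].
Qed.

Lemma indic_setT : indic setT = unitA p.
Proof. by apply: funext => n; rewrite /indic asboolT. Qed.

Lemma indic_set0 : indic set0 = (fun => 0).
Proof. by apply: funext => n; rewrite /indic asboolF. Qed.

Lemma indic_setC S : indic (~` S) = (fun n => unitA p n + (-1) * indic S n).
Proof.
apply: funext => n; rewrite /indic.
by case: asboolP => hC; case: asboolP => hS;
  rewrite ?mulr0 ?addr0 ?mulN1r ?subrr //; exfalso; exact: hC hS.
Qed.

End Indicators.

Section Characters.
Variable R : realType.
Local Notation C := R[i].
Local Notation normc := (@Normc.normc R).
Variable p : nat -> R.
Hypothesis p_pos : forall n, 0 < p n.
Local Notation pc n := (((p n)%:C)%C : C).
Variable psi : coeffs R -> C.
Hypothesis psi_char : isChar p psi.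

Lemma char_add a b : inA p a -> inA p b -> psi (fun n => a n + b n) = psi a + psi b.
Proof. by case: psi_char => _ H _ _ _; exact: H. Qed.

Lemma char_scale c a : inA p a -> psi (fun n => c * a n) = c * psi a.
Proof. by case: psi_char => _ _ H _ _; exact: H. Qed.

Lemma char_mul a b : inA p a -> inA p b -> psi (hprod p a b) = psi a * psi b.
Proof. by case: psi_char => _ _ _ H _; exact: H. Qed.

Lemma char_unitA : psi (unitA p) = 1.
Proof.
case: psi_char => _ _ _ Hm [a [aA a0]].
apply: (mulfI a0); rewrite mulr1 -Hm ?(hprod_unitA p_pos) //; exact: (inA_unitA p_pos).
Qed.

Lemma char_zero : psi (fun => 0) = 0.
Proof.
rewrite -[RHS](mul0r (psi (unitA p))) -char_scale; last exact: (inA_unitA p_pos).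
by congr psi; apply: funext => n; rewrite mul0r.
Qed.

(* 1_S is idempotent, so psi (1_S) is 0 or 1. *)
Lemma char_indic01 S : psi (indic p S) = 0 \/ psi (indic p S) = 1.
Proof.
have := char_mul (inA_indic p_pos S) (inA_indic p_pos S).
rewrite (hprod_indic p_pos) setIid => E.
have /eqP : psi (indic p S) * (psi (indic p S) - 1) = 0 by rewrite mulrBr mulr1 -E subrr.
by rewrite mulf_eq0 subr_eq0 => /orP [] /eqP; [left|right].
Qed.

Lemma char_indic_setC S : psi (indic p (~` S)) = 1 - psi (indic p S).
Proof.
rewrite (indic_setC p S) char_add ?char_scale ?char_unitA ?mulN1r //;
  by [exact: (inA_indic p_pos)|exact: (inA_unitA p_pos)|
       apply: (inA_scale p_pos); exact: (inA_indic p_pos)].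
Qed.

Lemma char_indic_setI A B :
  psi (indic p (A `&` B)) = psi (indic p A) * psi (indic p B).
Proof. by rewrite -(hprod_indic p_pos) char_mul //; exact: (inA_indic p_pos). Qed.

(* Elements whose weighted coefficients stay away from 0 are invertible, so
   no character vanishes on them. *)
Lemma char_neq0_away (b : coeffs R) (d : R) : inA p b -> 0 < d ->
  (forall n, d <= normc (pc n * b n)) -> psi b != 0.
Proof.
move=> bA d0 bd.
have bn0 n : pc n * b n != 0.
  by apply: contraTneq (bd n) => ->; rewrite Normc.normc0 -ltNge.
pose binv : coeffs R := fun n => (pc n * b n)^-1 / pc n.
have binv_w n : pc n * binv n = (pc n * b n)^-1.
  by rewrite mulrC divfK ?(pc_neq0 p_pos).
have binvA : inA p binv.
  apply/(inA_boundedE p_pos); exists d^-1 => n.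
  rewrite binv_w Normc.normcV lef_pV2 ?posrE //; exact: lt_le_trans d0 (bd n).
have : hprod p b binv = unitA p.
  apply: funext => n; apply: (mulfI (pc_neq0 p_pos n)).
  by rewrite hprod_weighted (unitA_weighted p_pos) binv_w mulfV.
move/(congr1 psi); rewrite char_mul // char_unitA => E.
by apply: contra_neq (oner_neq0 C) => b0; rewrite -E b0 mul0r.
Qed.

Lemma char_bound (a : coeffs R) (K : R) : inA p a ->
  (forall n, normc (pc n * a n) <= K) -> normc (psi a) <= K.
Proof.
move=> aA HK; rewrite leNgt; apply/negP => Klt.
pose b : coeffs R := fun n => a n + (- psi a) * unitA p n.
have uA := inA_unitA p_pos.
have bA : inA p b by apply: (inA_add p_pos) => //; exact: (inA_scale p_pos).
have : psi b != 0.
  apply: (char_neq0_away bA (_ : 0 < normc (psi a) - K)) => [|n].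
    by rewrite subr_gt0.
  rewrite lerBlDr /b mulrDr mulrCA (unitA_weighted p_pos) mulr1 normc_distC.
  have := normc_dist_tri (psi a) (pc n * a n) 0; rewrite !subr0 => /le_trans.
  by apply; rewrite lerD2l.
by rewrite /b char_add ?char_scale // ?char_unitA ?mulr1 ?subrr ?eqxx //;
  exact: (inA_scale p_pos).
Qed.

Lemma char_near (a : coeffs R) (S : set nat) (c : C) (d : R) : inA p a -> 0 <= d ->
  psi (indic p S) = 1 -> (forall n, S n -> normc (pc n * a n - c) <= d) ->
  normc (psi a - c) <= d.
Proof.
move=> aA d0 psiS Hd.
pose b := hprod p (fun n => a n + (- c) * unitA p n) (indic p S).
have uA := inA_unitA p_pos.
have acA : inA p (fun n => a n + (- c) * unitA p n).
  by apply: (inA_add p_pos) => //; exact: (inA_scale p_pos).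
have -> : psi a - c = psi b.
  rewrite /b char_mul ?psiS ?mulr1 ?char_add ?char_scale ?char_unitA ?mulr1 //;
    by [exact: (inA_indic p_pos)|exact: (inA_scale p_pos)].
apply: char_bound => [|n].
  by apply: (inA_hprod p_pos) => //; exact: (inA_indic p_pos).
rewrite hprod_weighted (indic_weighted p_pos) mulrDr mulrCA (unitA_weighted p_pos) mulr1.
by case: asboolP => [/Hd|_]; rewrite ?mulr1 ?mulr0 ?Normc.normc0.
Qed.

End Characters.

Lemma filter_forall_lt (T : Type) (F : set_system T) (P : nat -> T -> Prop) k :
  Filter F -> (forall j, (j < k)%N -> F [set x | P j x]) ->
  F [set x | forall j, (j < k)%N -> P j x].
Proof.
move=> FF; elim: k => [|k IH] H; first by apply: filterS filterT => x _ j.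
apply: filterS (filterI (IH (fun j jk => H j (ltnW jk))) (H k (ltnSn k))).
by move=> x [Hx Hk] j; rewrite ltnS leq_eqVlt => /orP [/eqP ->|]; last exact: Hx.
Qed.

(* Every ultrafilter G on the index set gives a character: the limit along G
   of the (bounded) weighted coefficients. These points of M(A(p)) are what
   the compactness argument below needs. *)
Section UltrafilterCharacters.
Variable R : realType.
Local Notation C := R[i].
Local Notation normc := (@Normc.normc R).
Local Notation Re := (@complex.Re R).
Local Notation Im := (@complex.Im R).
Variable p : nat -> R.
Hypothesis p_pos : forall n, 0 < p n.
Local Notation pc n := (((p n)%:C)%C : C).
Variable G : set_system nat.
Hypothesis G_ultra : UltraFilter G.

Lemma ultra_fmap (x : nat -> R) : UltraFilter (x @ G).
Proof.
split; first exact: fmap_proper_filter.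
move=> H HF sub; apply/seteqP; split; last exact: sub.
move=> A HA; have [//|GC] := in_ultra_setVsetC (x @^-1` A) G_ultra.
have : H (A `&` ~` A) by apply: filterI => //; apply: sub.
by rewrite setICr => /filter_not_empty.
Qed.

Lemma ultra_bounded_cvg (x : nat -> R) (K : R) :
  (forall n, `|x n| <= K) -> x @ G --> lim (x @ G).
Proof.
move=> xK; have := @segment_compact R (- K) K; rewrite compact_ultra => compK.
have GK : G (x @^-1` `[- K, K]).
  by apply: filterS (@filterT _ G _) => n _ /=; rewrite in_itv /= -ler_norml.
by have [l [_ /cvgP]] := compK (x @ G) (ultra_fmap x) GK.
Qed.

Definition ultraChar (a : coeffs R) : C :=
  if `[< inA p a >] then Complex (lim ((fun n => Re (pc n * a n)) @ G))
                                  (lim ((fun n => Im (pc n * a n)) @ G))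
  else 0.

Lemma ultraCharE a (w : C) : inA p a ->
  (fun n => Re (pc n * a n)) @ G --> Re w -> (fun n => Im (pc n * a n)) @ G --> Im w ->
  ultraChar a = w.
Proof.
move=> aA hRe hIm; rewrite /ultraChar asboolT // (cvg_lim _ hRe) ?(cvg_lim _ hIm) //.
by case: w {hRe hIm}.
Qed.

Lemma ultraChar_Re_cvg a : inA p a ->
  (fun n => Re (pc n * a n)) @ G --> Re (ultraChar a).
Proof.
move=> /[dup] aA /(inA_boundedE p_pos) [K HK]; rewrite /ultraChar asboolT //=.
by apply: (@ultra_bounded_cvg _ K) => n; exact: le_trans (normc_Re _) (HK n).
Qed.

Lemma ultraChar_Im_cvg a : inA p a ->
  (fun n => Im (pc n * a n)) @ G --> Im (ultraChar a).
Proof.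
move=> /[dup] aA /(inA_boundedE p_pos) [K HK]; rewrite /ultraChar asboolT //=.
by apply: (@ultra_bounded_cvg _ K) => n; exact: le_trans (normc_Im _) (HK n).
Qed.

Lemma ultraChar_near a (eps : R) : inA p a -> 0 < eps ->
  G [set n | normc (pc n * a n - ultraChar a) < eps].
Proof.
move=> aA e0; have FG : Filter G := @ultra_proper _ _ G_ultra.
have e2 : 0 < eps / 2 by rewrite divr_gt0.
have hRe := (cvgrPdist_lt _ _).1 (ultraChar_Re_cvg aA) _ e2.
have hIm := (cvgrPdist_lt _ _).1 (ultraChar_Im_cvg aA) _ e2.
apply: filterS (filterI (hRe FG) (hIm FG)) => n [/= r1 r2].
apply: le_lt_trans (normc_le_ReIm _) _; rewrite !raddfB /= [eps]splitr.
by rewrite distrC (distrC (Im _)) ltrD.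
Qed.

Lemma Re_mul (x y : C) : Re (x * y) = Re x * Re y - Im x * Im y.
Proof. by case: x => ? ?; case: y. Qed.

Lemma Im_mul (x y : C) : Im (x * y) = Re x * Im y + Im x * Re y.
Proof. by case: x => ? ?; case: y. Qed.

Lemma ultra_mul_cvg (u v : nat -> C) (x y : C) :
  (fun n => Re (u n)) @ G --> Re x -> (fun n => Im (u n)) @ G --> Im x ->
  (fun n => Re (v n)) @ G --> Re y -> (fun n => Im (v n)) @ G --> Im y ->
  (fun n => Re (u n * v n)) @ G --> Re (x * y) /\
  (fun n => Im (u n * v n)) @ G --> Im (x * y).
Proof.
move=> ux uy vx vy; rewrite Re_mul Im_mul.
have -> : (fun n => Re (u n * v n)) =
          (fun n => Re (u n) * Re (v n) - Im (u n) * Im (v n)).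
  by apply: funext => n; exact: Re_mul.
have -> : (fun n => Im (u n * v n)) =
          (fun n => Re (u n) * Im (v n) + Im (u n) * Re (v n)).
  by apply: funext => n; exact: Im_mul.
by split; [apply: cvgB|apply: cvgD]; apply: cvgM.
Qed.

Lemma ultraChar_isChar : isChar p ultraChar.
Proof.
have cRe := ultraChar_Re_cvg; have cIm := ultraChar_Im_cvg.
have cst (c : R) : (fun=> c) @ G --> c by exact: cvg_cst.
split.
- by move=> a aA; rewrite /ultraChar asboolF.
- move=> a b aA bA; apply: ultraCharE; first exact: inA_add.
    under eq_fun do rewrite mulrDr raddfD.
    by rewrite raddfD; exact: cvgD (cRe a aA) (cRe b bA).
  under eq_fun do rewrite mulrDr raddfD.
  by rewrite raddfD; exact: cvgD (cIm a aA) (cIm b bA).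
- move=> c a aA.
  have [hRe hIm] := ultra_mul_cvg (cst (Re c)) (cst (Im c)) (cRe a aA) (cIm a aA).
  apply: ultraCharE; first exact: inA_scale.
    by under eq_fun do rewrite mulrCA.
  by under eq_fun do rewrite mulrCA.
- move=> a b aA bA.
  have [hRe hIm] := ultra_mul_cvg (cRe a aA) (cIm a aA) (cRe b bA) (cIm b bA).
  apply: ultraCharE; first exact: inA_hprod.
    by under eq_fun do rewrite hprod_weighted.
  by under eq_fun do rewrite hprod_weighted.
- exists (unitA p); split; first exact: inA_unitA.
  rewrite (ultraCharE (w := 1)) ?oner_neq0 //; first exact: inA_unitA.
    by under eq_fun do rewrite (unitA_weighted p_pos); exact: cvg_cst.
  by under eq_fun do rewrite (unitA_weighted p_pos); exact: cvg_cst.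
Qed.

End UltrafilterCharacters.

Section Cech.
Variable R : realType.
Local Notation C := R[i].
Local Notation normc := (@Normc.normc R).
Variable p : nat -> R.
Hypothesis p_pos : forall n, 0 < p n.
Local Notation pc n := (((p n)%:C)%C : C).

Definition charSet (S : set nat) : set (coeffs R -> C) :=
  [set psi | isChar p psi /\ psi (indic p S) = 1].

(* charSet S is open: since psi (1_S) is 0 or 1, it is the basic
   neighbourhood {psi | |psi (1_S) - 1| < 1} of any of its points. *)
Lemma charSet_open S : gelfand_open p (charSet S).
Proof.
split=> [psi []//|phi [phiC phi1]].
exists 1%N, (fun=> indic p S), 1; split=> [i _|]; first exact: inA_indic.
split=> [|psi psiC /(_ 0%N isT)]; first exact: ltr01.
rewrite phi1 => close; split=> //; case: (char_indic01 p_pos psiC S) => // psi0.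
by move: close; rewrite psi0 sub0r normcN Normc.normc1 ltxx.
Qed.

Lemma charSet_sub A B : A `<=` B -> charSet A `<=` charSet B.
Proof.
move=> AB psi [psiC psiA]; split=> //.
have := char_indic_setI p_pos psiC A B; rewrite psiA mul1r => <-.
by rewrite ((setIidPl _ _).2 AB).
Qed.

Lemma charSet_finite_union (psi : coeffs R -> C) (m : nat) (A : nat -> set nat) :
  isChar p psi -> psi (indic p (\bigcup_(l < m) A l)) = 1 ->
  exists2 l, (l < m)%N & psi (indic p (A l)) = 1.
Proof.
move=> psiC; elim: m => [|m IH].
  rewrite bigcup_mkord big_ord0 indic_set0 (char_zero p_pos psiC).
  by move/esym/eqP; rewrite oner_eq0.
rewrite bigcup_mkord big_ord_recr -bigcup_mkord /=; set U := \bigcup_(l < m) A l.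
move=> psiU; case: (char_indic01 p_pos psiC (A m)) => psiA; last by exists m.
have [l lm psiAl] : exists2 l, (l < m)%N & psi (indic p (A l)) = 1.
  apply: IH; case: (char_indic01 p_pos psiC U) => // psiU0.
  have := char_indic_setI p_pos psiC (~` U) (~` A m).
  rewrite -setCU !(char_indic_setC p_pos psiC) psiU psiU0 psiA subrr !subr0 mul1r.
  by move/eqP; rewrite eq_sym oner_eq0.
by exists l => //; exact: ltnW.
Qed.

Lemma charSet_meet A B (psi : coeffs R -> C) :
  charSet A psi -> charSet B psi -> A `&` B !=set0.
Proof.
move=> [psiC psiA] [_ psiB]; apply/set0P/eqP => AB0.
have := char_indic_setI p_pos psiC A B; rewrite AB0 indic_set0 psiA psiB.
by rewrite (char_zero p_pos psiC) mulr1 => /eqP; rewrite eq_sym oner_eq0.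
Qed.

Section Cover.
Variables (I : Type) (U : I -> set (coeffs R -> C)).
Hypothesis U_open : forall i, gelfand_open p (U i).
Hypothesis U_cover : maxIdealSpace p `<=` \bigcup_i U i.

Definition fine (S : set nat) := exists i, charSet S `<=` U i.
Definition finitely_fine (S : set nat) := exists m (A : nat -> set nat),
  S `<=` \bigcup_(l < m) A l /\ forall l, (l < m)%N -> fine (A l).

Lemma finitely_fine_sub S S' : S `<=` S' -> finitely_fine S' -> finitely_fine S.
Proof. by move=> SS' [m [A [SA Af]]]; exists m, A; split => // n /SS' /SA. Qed.

Lemma finitely_fineU S1 S2 :
  finitely_fine S1 -> finitely_fine S2 -> finitely_fine (S1 `|` S2).
Proof.
move=> [m1 [A1 [H1 G1]]] [m2 [A2 [H2 G2]]].
exists (m1 + m2)%N, (fun l => if (l < m1)%N then A1 l else A2 (l - m1)%N); split.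
  move=> n [/H1 [l /= lm An]|/H2 [l /= lm An]].
    by exists l; rewrite /= ?lm //; lia.
  exists (m1 + l)%N; first by rewrite /=; lia.
  by rewrite ltnNge leq_addr addKn.
by move=> l lm; case: ifP => lm1; [exact: G1|apply: G2; lia].
Qed.

(* Each ultrafilter character has a basic neighbourhood inside some U i,
   which is controlled by a fine set belonging to the ultrafilter. *)
Lemma ultrafilter_fine (G : set_system nat) : UltraFilter G ->
  exists2 S, G S & fine S.
Proof.
move=> G_ultra; have FG : Filter G := @ultra_proper _ _ G_ultra.
have phiC := ultraChar_isChar p_pos G_ultra; set phi := ultraChar p G in phiC.
have [i _ Uphi] := U_cover phiC.
have [_ /(_ phi Uphi) [k [fs [eps [fsA [e0 nbhd]]]]]] := U_open i.
have e2 : 0 < eps / 2 by rewrite divr_gt0.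
exists [set n | forall j, (j < k)%N -> normc (pc n * fs j n - phi (fs j)) < eps / 2].
  apply: (filter_forall_lt FG) => j jk.
  exact: (ultraChar_near p_pos G_ultra (fsA j jk) e2).
exists i => psi [psiC psiS]; apply: nbhd => // j jk.
have := char_near p_pos psiC (fsA j jk) (ltW e2) psiS (fun n Sn => ltW (Sn j jk)).
move/le_lt_trans; apply.
by rewrite ltr_pdivrMr // ltr_pMr // ltr1n.
Qed.

(* Compactness of M(A(p)), in the form needed here: the whole index set is
   finitely fine. Otherwise the complements of finitely fine sets form a
   proper filter, and an ultrafilter refining it contains a fine set
   together with its complement. *)
Lemma finitely_fine_setT : finitely_fine setT.
Proof.
apply: contrapT => not_fine.
pose F := [set B : set nat | finitely_fine (~` B)].
have F_filter : Filter F.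
  split; rewrite /F /=.
  - by exists 0%N, (fun=> set0); split=> // n; rewrite setCT.
  - by move=> B1 B2 h1 h2 /=; rewrite setCI; exact: finitely_fineU.
  - by move=> B1 B2 B12; apply: finitely_fine_sub; exact: subsetC.
have F_proper : ~ F set0 by rewrite /F /= setC0.
have [G [G_ultra FG]] := ultraFilterLemma (Build_ProperFilter F_proper F_filter).
have [S GS fineS] := ultrafilter_fine G_ultra.
have GCS : G (~` S).
  by apply: FG; rewrite /F /= setCK; exists 1%N, (fun=> S); split=> // n Sn; exists 0%N.
have : G (S `&` ~` S) by apply: filterI.
by rewrite setICr; apply: filter_not_empty.
Qed.

End Cover.

(* Every open cover of M(A(p)) has a refinement by finitely many pairwise
   disjoint open sets charSet (seqDU A l); on such a cover every Cech
   1-cocycle is the coboundary of 0. *)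
Lemma cech_H1_trivial : cech_H1_Z_trivial (maxIdealSpace p) (gelfand_open p).
Proof.
move=> I U U_open U_cover g cocycle.
have [m [A [Acover Afine]]] := finitely_fine_setT U_open U_cover.
have [tau Utau] := @choice 'I_m I (fun l i => charSet (A l) `<=` U i)
  (fun l => Afine l (ltn_ord l)).
have Bcover : \bigcup_(l < m) seqDU A l = setT.
  by apply/seteqP; split=> // n _; rewrite bigcup_mkord -bigsetU_seqDU -bigcup_mkord;
    exact: Acover.
exists 'I_m, (fun l => charSet (seqDU A l)), tau; split.
- by move=> l; exact: charSet_open.
- move=> psi psiC; have psi1 := char_unitA p_pos psiC.
  rewrite -indic_setT -Bcover in psi1.
  have [l lm psiB] := charSet_finite_union psiC psi1.
  by exists (Ordinal lm).
- by move=> l; apply: subset_trans (Utau l); apply: charSet_sub; exact: subset_seqDU.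
exists (fun=> 0) => j k [psi [[psiX psij] psik]].
have jk : j = k.
  apply: val_inj; apply: (trivIset_seqDU A) => //.
  by have [n njk] := charSet_meet psij psik; exists n.
rewrite {}jk subrr; set i := tau k.
have Ui : U i psi by apply: Utau; apply: charSet_sub psik; exact: subset_seqDU.
have gii := cocycle i i i (ex_intro _ psi (conj (conj (conj psiX Ui) Ui) Ui)).
by apply: (addIr (g i i)); rewrite add0r.
Qed.
End Cech.

Unset Implicit Arguments.

Theorem mainTheorem11 (R : realType) (p : nat -> R)
  (p_pos : forall n, 0 < p n)
  (p_growth : forall M : R, exists N : nat, forall n : nat, (N <= n)%N ->
                M <= p n `^ (n%:R)^-1) :
  (forall g : coeffs R, invertibleA p g <-> exists f : coeffs R, inA p f /\ is_expA p f g)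
  /\ cech_H1_Z_trivial (maxIdealSpace p) (gelfand_open p).
Proof.
split; last exact: cech_H1_trivial p_pos.
by move=> g; split; [exact: (invertibleA_expA p_pos) | exact: (expA_invertibleA p_pos)].
Qed.
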